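(* For $\alpha\in\mathbb{S}_m$ and $\beta\in\mathbb{S}_{m'}$ let $\alpha\#\beta\in\mathbb{S}_{m+m'}$ be the concatenation ($\alpha$ acting on $\{1,\dots,m\}$ and $\beta$ shifted to act on $\{m+1,\dots,m+m'\}$). Then the class of $\alpha\#\beta$ in $\mathcal{H}_{m+m'}$ depends only on the classes of $\alpha$ in $\mathcal{H}_m$ and $\beta$ in $\mathcal{H}_{m'}$; in particular it does not depend on the choice of hyper arc diagrams (cyclic shifts $\sigma_m^{-k}\alpha\sigma_m^k$, $\sigma_{m'}^{-l}\beta\sigma_{m'}^l$) representing the hyper chord diagrams. Hence concatenation induces a well-defined bilinear product $\mathcal{H}_m\otimes\mathcal{H}_{m'}\to\mathcal{H}_{m+m'}$.
   Context: $\sigma_m=(1,\dots,m)$. $\mathcal{H}_m=\mathbb{C}[\mathbb{S}_m]/\mathcal{V}_m$, where $\mathcal{V}_m$ is the span of all generalized Vassiliev elements in $\mathbb{C}[\mathbb{S}_m]$ ($\mathcal{H}_0=\mathcal{H}_1=\mathbb{C}$). Generalized Vassiliev elements: let $m\ge2$, $\gamma\in\mathbb{S}_{m-1}$, $q\in[m-1]\cup\{*\}$. For $t\in\{0,\dots,m-1\}$ let $\alpha_t\in\mathbb{S}_m$ be obtained by inserting a new point $x$ (free leg) into the line $1<\dots<m-1$ in the gap between $t$ and $t+1$, relabeling all points $1,\dots,m$ in order, letting the permutation act as $\gamma$ on old points except $q\mapsto x\mapsto\gamma(q)$ if $q\ne*$, and $x$ fixed if $q=*$. For a cycle $v$ of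 $\gamma$, $E(\gamma,q,v)=\sum_{j\in v}(\alpha_{j-1}-\alpha_j)$. *)

From mathcomp Require Import all_boot all_order all_fingroup all_algebra all_field.
Set Implicit Arguments. Unset Strict Implicit. Unset Printing Implicit Defensive.
Import GRing.Theory.
Local Open Scope ring_scope.

(* Points 1..m are encoded as 'I_m = {0,..,m-1}; S_m is 'S_m. *)
(* The group algebra C[S_m] is {ffun 'S_m -> algC} (coefficient functions). *)
Definition gpalg (m : nat) := {ffun 'S_m -> algC}.

Definition pt (m : nat) (a : 'S_m) : gpalg m := [ffun s => ((s == a)%:R : algC)].

(* sigma_m = (1,...,m) : i |-> i+1 (mod m); ordS is exactly this cyclic successor. *)
Lemma ordS_inj m : injective (@ordS m).
Proof. exact: (can_inj (@ordSK m)). Qed.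
Definition sigma (m : nat) : 'S_m := perm (@ordS_inj m).

(* alpha_t for gamma in S_n (n = m-1), q in [n] or star (None = star), t a gap in I_(n+1):
   the new point x sits at position t, old point i goes to lift t i. *)
Definition alpha_t (n : nat) (g : 'S_n) (q : option 'I_n) (t : 'I_(n.+1)) : 'S_(n.+1) :=
  match q with
  | None => lift_perm t t g
  | Some q0 => (tperm t (lift t q0) * lift_perm t t g)%g
  end.

(* gap "j-1" and gap "j" for the (0-indexed) old point i = j-1 *)
Definition gap_before (n : nat) (i : 'I_n) : 'I_(n.+1) := widen_ord (leqnSn n) i.
Definition gap_after (n : nat) (i : 'I_n) : 'I_(n.+1) := lift ord0 i.

Definition vass (n : nat) (g : 'S_n) (q : option 'I_n) (v : {set 'I_n}) : gpalg n.+1 :=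
  [ffun s => \sum_(i in v)
      (pt (alpha_t g q (gap_before i)) s - pt (alpha_t g q (gap_after i)) s)].

Definition inV_S (n : nat) (x : gpalg n.+1) : Prop :=
  exists c : 'S_n -> option 'I_n -> {set 'I_n} -> algC,
    forall s, x s = \sum_(g : 'S_n) \sum_(q : option 'I_n)
                    \sum_(v in porbits g) c g q v * vass g q v s.

(* V_m (V_0 = 0; for m = 1 the family of generators is empty, so V_1 = 0) *)
Definition inV (m : nat) : gpalg m -> Prop :=
  match m with
  | 0 => fun x => x = 0
  | n.+1 => @inV_S n
  end.

(* congruence modulo V_m, i.e. equality in H_m = C[S_m]/V_m *)
Definition eqH (m : nat) (x y : gpalg m) : Prop := inV (x - y).

Definition concat_fun (m m' : nat) (a : 'S_m) (b : 'S_m') (i : 'I_(m + m')) : 'I_(m + m') :=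
  unsplit (match split i with inl j => inl (a j) | inr k => inr (b k) end).

Lemma concat_fun_inj m m' (a : 'S_m) (b : 'S_m') : injective (concat_fun a b).
Proof.
move=> i j; rewrite /concat_fun => /(congr1 split); rewrite !unsplitK => E.
rewrite -(splitK i) -(splitK j); move: E.
case: (split i) => [i1|i2]; case: (split j) => [j1|j2] //.
- by case=> /perm_inj ->.
- by case=> /perm_inj ->.
Qed.

Definition concat (m m' : nat) (a : 'S_m) (b : 'S_m') : 'S_(m + m') :=
  perm (@concat_fun_inj m m' a b).

Definition concatL (m m' : nat) (x : gpalg m) (y : gpalg m') : gpalg (m + m') :=
  [ffun s => \sum_(a : 'S_m) \sum_(b : 'S_m') x a * y b * ((concat a b == s)%:R : algC)].

(* Concatenation is bilinear, so it suffices that V_m # C[S_m'] and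
   C[S_m] # V_m' lie in V_(m+m').  Inserting a free leg commutes with
   concatenation: E(g,q,v) # b is the generator E(g # b, q, v), and
   a # E(g,q,v) is E(a # g, m+q, m+v).  For the second claim, write a
   permutation as alpha_(m-1) for suitable (g, q); its conjugate by sigma_m is
   alpha_0, and the sum of E(g,q,v) over all cycles v of g telescopes to
   alpha_0 - alpha_(m-1). *)

From mathcomp Require Import all_boot all_order all_fingroup all_algebra all_field.
From mathcomp Require Import zify ring.
Set Implicit Arguments. Unset Strict Implicit. Unset Printing Implicit Defensive.
Import GRing.Theory.

Section NatPerm.
Variable N : nat.
Implicit Types p : 'S_N.

(* Permutations are compared through their extension by the identity to [nat]:
   this makes casts between 'S_(n.+1 + m') and 'S_((n + m').+1) invisible and
   turns the combinatorics of insertion and concatenation into arithmetic. *)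
Definition natperm p (x : nat) : nat :=
  if insub x : option 'I_N is Some y then val (p y) else x.

Lemma natpermE p (y : 'I_N) : natperm p y = p y.
Proof. by rewrite /natperm valK. Qed.

Lemma natperm_id p x : N <= x -> natperm p x = x.
Proof. by move=> hx; rewrite /natperm insubN // -leqNgt. Qed.

Lemma natperm_lt p x : x < N -> natperm p x < N.
Proof. by move=> hx; rewrite -[x]/(val (Ordinal hx)) natpermE. Qed.

Lemma eq_natperm p p' :
  (forall x, x < N -> natperm p x = natperm p' x) -> p = p'.
Proof. by move=> h; apply/permP => y; apply: val_inj; rewrite /= -!natpermE h. Qed.

Lemma natpermM p p' x : natperm (p * p')%g x = natperm p' (natperm p x).
Proof.
case: (ltnP x N) => hx; last by rewrite !natperm_id.
by rewrite -[x]/(val (Ordinal hx)) !natpermE permM.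
Qed.

Lemma natperm_tperm (i j : 'I_N) x :
  natperm (tperm i j) x = if x == i then val j else if x == j then val i else x.
Proof.
case: (ltnP x N) => hx; last first.
  rewrite natperm_id // !ifN_eq //; apply/eqP => e; move: hx; rewrite e leqNgt ltn_ord //.
rewrite -[x]/(val (Ordinal hx)) natpermE permE /= /tperm.
by rewrite !(fun_if val) -!val_eqE.
Qed.

End NatPerm.

Lemma natperm_cast N1 N2 (e : N1 = N2) (p : 'S_N1) : natperm (cast_perm e p) =1 natperm p.
Proof. by case: N2 / e; rewrite cast_perm_id. Qed.

Lemma natperm_lift_perm n (i j : 'I_n.+1) (p : 'S_n) x :
  natperm (lift_perm i j p) x =
    if x == i then val j else bump j (natperm p (unbump i x)).
Proof.
case: (ltnP x n.+1) => hx; last first.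
  have xi : x != i by apply/eqP => e; move: hx; rewrite e leqNgt ltn_ord.
  rewrite !natperm_id ?(negbTE xi) //; move: (ltn_ord i) (ltn_ord j) hx xi;
    rewrite /bump /unbump; case: ltnP; case: leqP; lia.
rewrite -[x]/(val (Ordinal hx)) natpermE.
case: (unliftP i (Ordinal hx)) => [k|] ->; last by rewrite lift_perm_id eqxx.
by rewrite lift_perm_lift /= bumpK natpermE eq_sym (negbTE (neq_bump _ _)).
Qed.

Definition concatn (m : nat) (f h : nat -> nat) (x : nat) : nat :=
  if x < m then f x else m + h (x - m).

Definition insertn (t : nat) (q : option nat) (f : nat -> nat) (x : nat) : nat :=
  if x == t then (if q is Some q0 then bump t (f q0) else t)
  else if q == Some (unbump t x) then t
  else bump t (f (unbump t x)).

Lemma eq_concatn m f f' h h' : f =1 f' -> h =1 h' -> concatn m f h =1 concatn m f' h'.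
Proof. by move=> ff hh x; rewrite /concatn ff hh. Qed.

Lemma eq_insertn t q f f' : f =1 f' -> insertn t q f =1 insertn t q f'.
Proof. by move=> ff x; rewrite /insertn; case: q => [q0|]; rewrite ?ff. Qed.

Lemma natperm_concat m m' (a : 'S_m) (b : 'S_m') :
  natperm (concat a b) =1 concatn m (natperm a) (natperm b).
Proof.
move=> x; rewrite /concatn; case: (ltnP x (m + m')) => hx; last first.
  by rewrite !natperm_id ?ifN -?leqNgt //; lia.
rewrite -[x]/(val (Ordinal hx)) natpermE permE /concat_fun.
by case: splitP => [j|k] /= ->; rewrite ?addKn natpermE ?ltn_ord //.
Qed.

Lemma natperm_alpha n (g : 'S_n) q (t : 'I_n.+1) :
  natperm (alpha_t g q t) =1 insertn t (omap val q) (natperm g).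
Proof.
move=> x; rewrite /insertn; case: q => [q0|] /=; last by rewrite natperm_lift_perm.
rewrite natpermM natperm_tperm.
have [_|xt] := eqVneq x t.
  by rewrite natperm_lift_perm eq_sym (negbTE (neq_bump _ _)) bumpK natpermE.
have [->|xq] := eqVneq x (bump t q0).
  by rewrite natperm_lift_perm eqxx bumpK eqxx.
rewrite natperm_lift_perm (negbTE xt); case: eqP => // -[e].
by case/eqP: xq; rewrite e unbumpK.
Qed.

Lemma natperm_sigma m x :
  natperm (sigma m) x = if x < m then x.+1 %% m else x.
Proof.
case: (ltnP x m) => hx; last by rewrite natperm_id.
by rewrite -[x]/(val (Ordinal hx)) natpermE permE.
Qed.

Lemma concatn_insertn_l n t q f h : t <= n -> (forall q0, q = Some q0 -> q0 < n) ->
  concatn n.+1 (insertn t q f) h =1 insertn t q (concatn n f h).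
Proof.
move=> tn qn x; rewrite /concatn /insertn.
case: (ltnP x n.+1) => hx.
  have [_|xt] := eqVneq x t; first by case: q qn => [q0 /(_ q0 erefl) ->|].
  have -> // : unbump t x < n.
  by move: xt; rewrite /unbump; case: (ltnP t x) => /=; lia.
have -> : (x == t) = false by apply/eqP; lia.
have -> : unbump t x = x.-1 by rewrite /unbump; case: (ltnP t x) => /=; lia.
have -> : (q == Some x.-1) = false.
  by case: q qn => [q0 /(_ q0 erefl) q0n|] //; apply/eqP => -[]; lia.
rewrite ifN -?leqNgt; last lia.
rewrite /bump (leq_trans tn (leq_addr _ _)) add1n addSn.
by have -> : x.-1 - n = x - n.+1 by lia.
Qed.

Lemma concatn_insertn_r m t q f h : (forall x, x < m -> f x < m) ->
  concatn m f (insertn t q h) =1 insertn (m + t) (omap (addn m) q) (concatn m f h).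
Proof.
move=> fm x; rewrite /concatn /insertn.
case: (ltnP x m) => hx; last first.
  rewrite -(subnKC hx); move: (x - m) => y.
  rewrite eqn_add2l unbumpDl ltnNge leq_addr /= addKn.
  have [_|yt] := eqVneq y t.
    by case: q => [q0|] //=; rewrite ltnNge leq_addr /= addKn bumpDl.
  case: q => [q0|] /=; last by rewrite addKn bumpDl.
  rewrite !(inj_eq (@Some_inj _)) eqn_add2l.
  by case: ifP => _ //; rewrite addKn bumpDl.
have -> : (x == m + t) = false by apply/eqP; lia.
have -> : unbump (m + t) x = x.
  by rewrite /unbump ltnNge (leq_trans (ltnW hx) (leq_addr _ _)) subn0.
have -> : (omap (addn m) q == Some x) = false.
  by case: q => [q0|] //=; apply/eqP => -[]; lia.
by rewrite hx /bump leqNgt (leq_trans (fm x hx) (leq_addr _ _)).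
Qed.

Lemma concat_alpha_l n m' (g : 'S_n) q (t : 'I_n.+1) (t' : 'I_(n + m').+1)
    (b : 'S_m') :
  val t' = val t ->
  cast_perm (addSn n m') (concat (alpha_t g q t) b) =
  alpha_t (concat g b) (omap (lshift m') q) t'.
Proof.
move=> tt'; apply: eq_natperm => x _.
rewrite natperm_cast (natperm_concat (alpha_t g q t) b x).
rewrite (eq_concatn n.+1 (natperm_alpha g q t) (frefl (natperm b)) x).
have tn : t <= n by rewrite -ltnS.
have qn : forall q0, omap val q = Some q0 -> q0 < n by case: q => [q0 _ [<-]|].
rewrite (concatn_insertn_l _ _ tn qn) {tn qn}.
rewrite (natperm_alpha (concat g b)) tt'.
have -> : omap val (omap (lshift m') q) = omap val q by case: q.
exact: esym (eq_insertn _ _ (natperm_concat g b) x).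
Qed.

Lemma concat_alpha_r m n (a : 'S_m) (g : 'S_n) q (t : 'I_n.+1) (t' : 'I_(m + n).+1) :
  val t' = m + t ->
  cast_perm (addnS m n) (concat a (alpha_t g q t)) =
  alpha_t (concat a g) (omap (@rshift m n) q) t'.
Proof.
move=> tt'; apply: eq_natperm => x _.
rewrite natperm_cast (natperm_concat a (alpha_t g q t) x).
rewrite (eq_concatn m (frefl (natperm a)) (natperm_alpha g q t) x).
rewrite (concatn_insertn_r _ _ _ (@natperm_lt _ a)) (natperm_alpha (concat a g)) tt'.
have -> : omap val (omap (@rshift m n) q) = omap (addn m) (omap val q) by case: q.
exact: esym (eq_insertn _ _ (natperm_concat a g) x).
Qed.

Lemma insertn_rot n q f x : (forall y, y < n -> f y < n) ->
    (forall q0, q = Some q0 -> q0 < n) -> x < n.+1 ->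
  insertn 0 q f (x.+1 %% n.+1) = (insertn n q f x).+1 %% n.+1.
Proof.
move=> fn qn; rewrite ltnS leq_eqVlt => /predU1P[->|xn].
  rewrite modnn /insertn !eqxx.
  case: q qn => [q0 /(_ q0 erefl) q0n|]; last by rewrite modnn.
  by rewrite /bump [(n <= _)]leqNgt fn // modn_small // ltnS fn.
have xn1 : x.+1 < n.+1 by [].
rewrite (modn_small xn1) /insertn /unbump (ltn_eqF xn) [n < x]ltnNge (ltnW xn) subn0.
have -> : x.+1 - (0 < x.+1) = x by rewrite subn1.
case: ifP => _; first by rewrite modnn.
by rewrite /bump [(n <= _)]leqNgt fn // modn_small // ltnS fn.
Qed.

Lemma alpha_t_conj_sigma n (g : 'S_n) q :
  (alpha_t g q ord_max ^ sigma n.+1)%g = alpha_t g q ord0.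
Proof.
apply: (mulgI (sigma n.+1)); rewrite conjgE !mulgA mulgV mul1g.
apply: eq_natperm => x xn; rewrite !natpermM !natperm_sigma xn.
rewrite (natperm_lt _ xn) (natperm_alpha g q ord0) (natperm_alpha g q ord_max).
have qn : forall q0, omap val q = Some q0 -> q0 < n by case: q => [q0 _ [<-]|].
exact: esym (insertn_rot (@natperm_lt _ g) qn xn).
Qed.

Lemma lift_perm_fix n (t : 'I_n.+1) (a : 'S_n.+1) :
  a t = t -> exists g : 'S_n, a = lift_perm t t g.
Proof.
move=> at_t; pose f i := odflt i (unlift t (a (lift t i))).
have liftK i : lift t (f i) = a (lift t i).
  rewrite /f; case: (unliftP t (a (lift t i))) => [j ->|ai] //=.
  move/perm_inj: (etrans ai (esym at_t)) => /eqP.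
  by rewrite eq_sym (negbTE (neq_lift _ _)).
have f_inj : injective f.
  move=> i j fij; apply: (lift_inj (h:=t)); apply: (perm_inj (s:=a)).
  by rewrite -!liftK fij.
exists (perm f_inj); apply/permP => y; case: (unliftP t y) => [i|] ->.
  by rewrite lift_perm_lift permE liftK.
by rewrite lift_perm_id.
Qed.

Lemma alpha_t_onto n (t : 'I_n.+1) (a : 'S_n.+1) :
  exists g q, a = alpha_t g q t.
Proof.
set r := (a^-1)%g t.
have [g ag] : exists g : 'S_n, (tperm t r * a)%g = lift_perm t t g.
  by apply: lift_perm_fix; rewrite permM tpermL /r permKV.
exists g; case: (unliftP t r) => [q0 rq|rt].
  by exists (Some q0); rewrite /= -ag -rq mulgA tperm2 mul1g.
by exists None; rewrite /= -ag rt tperm1 mul1g.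
Qed.

Local Open Scope ring_scope.

Section VassilievSpan.
Variable n : nat.
Implicit Types x y : gpalg n.+1.

Lemma inV_S_ext x y : x =1 y -> inV_S y -> inV_S x.
Proof. by move=> xy; have -> : x = y by apply/ffunP. Qed.

Lemma inV_S0 : inV_S (0 : gpalg n.+1).
Proof.
exists (fun _ _ _ => 0) => s; rewrite ffunE big1 // => g _.
by rewrite big1 // => q _; rewrite big1 // => v _; rewrite mul0r.
Qed.

Lemma inV_SD x y : inV_S x -> inV_S y -> inV_S (x + y).
Proof.
move=> [c xc] [d yd]; exists (fun g q v => c g q v + d g q v) => s.
rewrite ffunE xc yd -big_split; apply: eq_bigr => g _.
rewrite -big_split; apply: eq_bigr => q _.
by rewrite -big_split; apply: eq_bigr => v _; rewrite mulrDl.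
Qed.

Lemma inV_SZ k x : inV_S x -> inV_S [ffun s => k * x s].
Proof.
move=> [c xc]; exists (fun g q v => k * c g q v) => s.
rewrite ffunE xc mulr_sumr; apply: eq_bigr => g _.
rewrite mulr_sumr; apply: eq_bigr => q _.
by rewrite mulr_sumr; apply: eq_bigr => v _; rewrite mulrA.
Qed.

Lemma inV_SN x : inV_S x -> inV_S (- x).
Proof. by move/(inV_SZ (-1)); apply: inV_S_ext => s; rewrite !ffunE mulN1r. Qed.

Lemma inV_S_sum (I : finType) (P : pred I) (F : I -> gpalg n.+1) :
  (forall i, P i -> inV_S (F i)) -> inV_S (\sum_(i | P i) F i).
Proof. by move=> FV; apply: big_ind => //; [apply: inV_S0 | apply: inV_SD]. Qed.

Lemma inV_S_vass (g : 'S_n) q v : v \in porbits g -> inV_S (vass g q v).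
Proof.
move=> gv; exists (fun g' q' v' => ((g' == g) && (q' == q) && (v' == v))%:R) => s.
rewrite (bigD1 g) //= [X in _ + X]big1 ?addr0; last first.
  move=> g' /negbTE gg'; rewrite gg' big1 // => q' _.
  by rewrite big1 // => v' _; rewrite mul0r.
rewrite (bigD1 q) //= [X in _ + X]big1 ?addr0; last first.
  move=> q' /negbTE qq'; rewrite qq' big1 // => v' _.
  by rewrite andbF mul0r.
rewrite (bigD1 v) //= [X in _ + X]big1 ?addr0; last first.
  by move=> v' /andP[_ /negbTE vv']; rewrite vv' andbF mul0r.
by rewrite !eqxx mul1r.
Qed.

End VassilievSpan.

Lemma inV0 N : inV (0 : gpalg N).
Proof. by case: N => [|n] //=; exact: inV_S0. Qed.

Lemma inVD N (x y : gpalg N) : inV x -> inV y -> inV (x + y).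
Proof. by case: N x y => [|n] x y /=; [move=> -> ->; rewrite addr0 | apply: inV_SD]. Qed.

Lemma inV_cast N1 N2 (e : N1 = N2) (z : gpalg N1) :
  inV ([ffun s => z (cast_perm (esym e) s)] : gpalg N2) -> inV z.
Proof.
by case: N2 / e; congr inV; apply/ffunP => s; rewrite ffunE cast_perm_id.
Qed.

Lemma inV_S_kernel n p (K : 'S_n.+1 -> 'S_p.+1 -> algC) (x : gpalg n.+1)
    (z : gpalg p.+1) :
  (forall g q v, v \in porbits g ->
     inV_S [ffun s => \sum_a vass g q v a * K a s]) ->
  inV_S x -> (forall s, z s = \sum_a x a * K a s) -> inV_S z.
Proof.
move=> KV [c xc] zK.
pose Kvass g q v := [ffun s => c g q v * \sum_a vass g q v a * K a s].
apply: (@inV_S_ext _ _ (\sum_g \sum_q \sum_(v in porbits g) Kvass g q v)); last first.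
  apply: inV_S_sum => g _; apply: inV_S_sum => q _; apply: inV_S_sum => v gv.
  by apply: inV_S_ext (inV_SZ (c g q v) (KV g q v gv)) => s; rewrite !ffunE.
move=> s; rewrite zK !sum_ffunE.
transitivity (\sum_a \sum_g \sum_q \sum_(v in porbits g)
                c g q v * (vass g q v a * K a s)).
  apply: eq_bigr => a _; rewrite xc big_distrl; apply: eq_bigr => g _.
  rewrite big_distrl; apply: eq_bigr => q _.
  by rewrite big_distrl; apply: eq_bigr => v _; rewrite mulrA.
rewrite exchange_big; apply: eq_bigr => g _.
rewrite sum_ffunE exchange_big; apply: eq_bigr => q _.
rewrite sum_ffunE exchange_big; apply: eq_bigr => v _.
by rewrite ffunE mulr_sumr.
Qed.

Section ConcatOrbits.
Variables (m m' : nat) (a : 'S_m) (b : 'S_m').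

Lemma concat_lshift j : concat a b (lshift m' j) = lshift m' (a j).
Proof. by rewrite permE /concat_fun (unsplitK (inl j)). Qed.

Lemma concat_rshift k : concat a b (rshift m k) = rshift m (b k).
Proof. by rewrite permE /concat_fun (unsplitK (inr k)). Qed.

Lemma concatX_lshift i j :
  ((concat a b) ^+ i)%g (lshift m' j) = lshift m' ((a ^+ i)%g j).
Proof.
elim: i j => [|i IH] j; first by rewrite !expg0 !perm1.
by rewrite !expgS !permM concat_lshift IH.
Qed.

Lemma concatX_rshift i k :
  ((concat a b) ^+ i)%g (rshift m k) = rshift m ((b ^+ i)%g k).
Proof.
elim: i k => [|i IH] k; first by rewrite !expg0 !perm1.
by rewrite !expgS !permM concat_rshift IH.
Qed.

Lemma porbits_concat_l v : v \in porbits a -> lshift m' @: v \in porbits (concat a b).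
Proof.
case/imsetP => j _ ->; apply/imsetP; exists (lshift m' j) => //.
apply/setP => y; apply/imsetP/porbitP.
  by case=> z /porbitP [i ->] ->; exists i; rewrite concatX_lshift.
by case=> i ->; exists ((a ^+ i)%g j); rewrite ?mem_porbit // concatX_lshift.
Qed.

Lemma porbits_concat_r v : v \in porbits b -> @rshift m m' @: v \in porbits (concat a b).
Proof.
case/imsetP => k _ ->; apply/imsetP; exists (rshift m k) => //.
apply/setP => y; apply/imsetP/porbitP.
  by case=> z /porbitP [i ->] ->; exists i; rewrite concatX_rshift.
by case=> i ->; exists ((b ^+ i)%g k); rewrite ?mem_porbit // concatX_rshift.
Qed.

End ConcatOrbits.

Lemma sum_pt_mul N (c : 'S_N) (F : 'S_N -> algC) : \sum_a pt c a * F a = F c.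
Proof.
rewrite (bigD1 c) //= [X in _ + X]big1 ?addr0; last first.
  by move=> a /negbTE ac; rewrite ffunE ac mul0r.
by rewrite ffunE eqxx mul1r.
Qed.

Lemma sum_vass_mul n (g : 'S_n) q v (F : 'S_n.+1 -> algC) :
  \sum_a vass g q v a * F a =
  \sum_(i in v) (F (alpha_t g q (gap_before i)) - F (alpha_t g q (gap_after i))).
Proof.
transitivity (\sum_a \sum_(i in v) (pt (alpha_t g q (gap_before i)) a * F a
                                     - pt (alpha_t g q (gap_after i)) a * F a)).
  apply: eq_bigr => a _; rewrite ffunE big_distrl.
  by apply: eq_bigr => i _; rewrite /= mulrBl.
by rewrite exchange_big; apply: eq_bigr => i _; rewrite sumrB !sum_pt_mul.
Qed.

Lemma vass_concat_l n m' (g : 'S_n) q v (b : 'S_m') (s : 'S_((n + m').+1)) :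
  \sum_a vass g q v a * (cast_perm (addSn n m') (concat a b) == s)%:R =
  vass (concat g b) (omap (lshift m') q) (lshift m' @: v) s.
Proof.
rewrite sum_vass_mul ffunE big_imset /=; last by move=> i j _ _; apply: lshift_inj.
apply: eq_bigr => i _; rewrite !ffunE.
rewrite (@concat_alpha_l _ _ g q (gap_before i) (gap_before (lshift m' i))) //.
rewrite (@concat_alpha_l _ _ g q (gap_after i) (gap_after (lshift m' i))) //.
by rewrite !(eq_sym s).
Qed.

Lemma vass_concat_r m n (a : 'S_m) (g : 'S_n) q v (s : 'S_((m + n).+1)) :
  \sum_b vass g q v b * (cast_perm (addnS m n) (concat a b) == s)%:R =
  vass (concat a g) (omap (@rshift m n) q) (@rshift m n @: v) s.
Proof.
rewrite sum_vass_mul ffunE big_imset /=; last by move=> i j _ _; apply: rshift_inj.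
apply: eq_bigr => i _; rewrite !ffunE.
rewrite (@concat_alpha_r _ _ a g q (gap_before i) (gap_before (rshift m i))) //.
rewrite (@concat_alpha_r _ _ a g q (gap_after i) (gap_after (rshift m i))) ?(eq_sym s) //.
by rewrite /= /bump !add1n addnS.
Qed.

Lemma cast_perm_eq N1 N2 (e : N1 = N2) (p : 'S_N1) (s : 'S_N2) :
  (p == cast_perm (esym e) s) = (cast_perm e p == s).
Proof. by case: N2 / e s => s; rewrite !cast_perm_id. Qed.

Lemma concatL0l m m' (y : gpalg m') : concatL (0 : gpalg m) y = 0.
Proof.
apply/ffunP => s; rewrite !ffunE big1 // => a _.
by rewrite big1 // => b _; rewrite ffunE !mul0r.
Qed.

Lemma concatL0r m m' (x : gpalg m) : concatL x (0 : gpalg m') = 0.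
Proof.
apply/ffunP => s; rewrite !ffunE big1 // => a _.
by rewrite big1 // => b _; rewrite ffunE mulr0 mul0r.
Qed.

Lemma inV_concatL_l m m' (w : gpalg m) (y : gpalg m') : inV w -> inV (concatL w y).
Proof.
case: m w => [|n] w; first by move=> /= ->; rewrite concatL0l; apply: inV0.
move=> wV; apply: (@inV_cast _ _ (addSn n m') (concatL w y)).
pose K a s := \sum_b y b * (cast_perm (addSn n m') (concat a b) == s)%:R.
apply: (@inV_S_kernel _ _ K _ _ _ wV) => [g q v gv|s]; last first.
  rewrite !ffunE; apply: eq_bigr => a _.
  by rewrite mulr_sumr; apply: eq_bigr => b _; rewrite cast_perm_eq mulrA.
pose vassb b :=
  [ffun s => y b * vass (concat g b) (omap (lshift m') q) (lshift m' @: v) s].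
apply: (@inV_S_ext _ _ (\sum_b vassb b)); last first.
  by apply: inV_S_sum => b _; apply: inV_SZ; apply: inV_S_vass; apply: porbits_concat_l.
move=> s; rewrite ffunE sum_ffunE.
under eq_bigr => a _ do rewrite mulr_sumr.
rewrite exchange_big; apply: eq_bigr => b _.
rewrite ffunE -vass_concat_l mulr_sumr; apply: eq_bigr => a _.
by rewrite mulrCA.
Qed.

Lemma inV_concatL_r m m' (x : gpalg m) (w : gpalg m') : inV w -> inV (concatL x w).
Proof.
case: m' w => [|n] w; first by move=> /= ->; rewrite concatL0r; apply: inV0.
move=> wV; apply: (@inV_cast _ _ (addnS m n) (concatL x w)).
pose K b s := \sum_a x a * (cast_perm (addnS m n) (concat a b) == s)%:R.
apply: (@inV_S_kernel _ _ K _ _ _ wV) => [g q v gv|s]; last first.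
  rewrite !ffunE exchange_big; apply: eq_bigr => b _.
  by rewrite mulr_sumr; apply: eq_bigr => a _; rewrite cast_perm_eq mulrCA mulrA.
pose vassa a :=
  [ffun s => x a * vass (concat a g) (omap (@rshift m n) q) (@rshift m n @: v) s].
apply: (@inV_S_ext _ _ (\sum_a vassa a)); last first.
  by apply: inV_S_sum => a _; apply: inV_SZ; apply: inV_S_vass; apply: porbits_concat_r.
move=> s; rewrite ffunE sum_ffunE.
under eq_bigr => b _ do rewrite mulr_sumr.
rewrite exchange_big; apply: eq_bigr => a _.
rewrite ffunE -vass_concat_r mulr_sumr; apply: eq_bigr => b _.
by rewrite mulrCA.
Qed.

Lemma concatL_pt m m' (a : 'S_m) (b : 'S_m') : concatL (pt a) (pt b) = pt (concat a b).
Proof.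
apply/ffunP => s; rewrite ffunE.
transitivity (\sum_a' pt a a' * \sum_b' pt b b' * (concat a' b' == s)%:R).
  by apply: eq_bigr => a' _; rewrite mulr_sumr; apply: eq_bigr => b' _; rewrite mulrA.
by rewrite !sum_pt_mul ffunE eq_sym.
Qed.

Lemma concatLB m m' (x x' : gpalg m) (y y' : gpalg m') :
  concatL x y - concatL x' y' = concatL (x - x') y + concatL x' (y - y').
Proof.
apply/ffunP => s; rewrite !ffunE -sumrB -big_split; apply: eq_bigr => a _.
by rewrite -sumrB -big_split; apply: eq_bigr => b _; rewrite !ffunE /=; ring.
Qed.

Lemma eqH_concatL m m' (x x' : gpalg m) (y y' : gpalg m') :
  eqH x x' -> eqH y y' -> eqH (concatL x y) (concatL x' y').
Proof.
rewrite /eqH concatLB => xx' yy'.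
by apply: inVD; [apply: inV_concatL_l | apply: inV_concatL_r].
Qed.

Lemma sum_porbits (R : nmodType) (T : finType) (s : {perm T}) (F : T -> R) :
  \sum_(v in porbits s) \sum_(i in v) F i = \sum_i F i.
Proof.
rewrite [RHS](partition_big_imset (porbit s)); apply: eq_bigr => _ /imsetP[x _ ->].
by apply: eq_bigl => i; rewrite eq_porbit_mem.
Qed.

Lemma telescope_gaps (V : zmodType) n (f : 'I_n.+1 -> V) :
  \sum_(i < n) (f (gap_before i) - f (gap_after i)) = f ord0 - f ord_max.
Proof.
pose F k := f (inord k).
have Fi (i : 'I_n.+1) : F i = f i by rewrite /F inord_val.
transitivity (\sum_(0 <= k < n) - (F k.+1 - F k)).
  rewrite big_mkord; apply: eq_bigr => i _; rewrite opprB.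
  by rewrite -[i : nat]/(val (gap_before i)) Fi -[i.+1]/(val (gap_after i)) Fi.
rewrite sumrN telescope_sumr // opprB.
by rewrite -[0%N]/(val (@ord0 n)) -[X in _ - F X]/(val (@ord_max n)) !Fi.
Qed.

Lemma sum_vass_porbits n (g : 'S_n) q s :
  \sum_(v in porbits g) vass g q v s =
  pt (alpha_t g q ord0) s - pt (alpha_t g q ord_max) s.
Proof.
under eq_bigr => v _ do rewrite ffunE.
by rewrite sum_porbits (telescope_gaps (fun t => pt (alpha_t g q t) s)).
Qed.

Lemma inV_S_conj_sigma n (a : 'S_n.+1) : inV_S (pt a - pt (a ^ sigma n.+1)%g).
Proof.
have [g [q ->]] := alpha_t_onto ord_max a; rewrite alpha_t_conj_sigma.
apply: (@inV_S_ext _ _ (- \sum_(v in porbits g) vass g q v)).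
  by move=> s; rewrite /= !ffunE sum_ffunE sum_vass_porbits !ffunE opprB.
by apply: inV_SN; apply: inV_S_sum => v; apply: inV_S_vass.
Qed.

Lemma eqH_conj_sigma m (a : 'S_m) k : eqH (pt a) (pt (a ^ (sigma m ^+ k))%g).
Proof.
elim: k => [|k IH]; first by rewrite /eqH expg0 conjg1 subrr; apply: inV0.
rewrite /eqH expgSr conjgM -(subrK (pt (a ^ (sigma m ^+ k))%g) (pt a)) -addrA.
apply: inVD => //; case: m a {IH} => [|n] a; last exact: inV_S_conj_sigma.
by rewrite [X in pt X - _]permS0 [X in _ - pt X]permS0 subrr; apply: inV0.
Qed.

Unset Implicit Arguments.

Theorem proposition14 (m m' : nat) :
  (forall (x x' : gpalg m) (y y' : gpalg m'),
      eqH x x' -> eqH y y' -> eqH (concatL x y) (concatL x' y'))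
  /\
  (forall (a : 'S_m) (b : 'S_m') (k l : nat),
      eqH (pt (concat a b))
          (pt (concat (a ^ (sigma m ^+ k))%g (b ^ (sigma m' ^+ l))%g))).
Proof.
split; first exact: eqH_concatL.
by move=> a b k l; rewrite -!concatL_pt; apply: eqH_concatL; apply: eqH_conj_sigma.
Qed.
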